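(* If $K\subset L^1$ is uniformly integrable, then its closed convex hull in $L^1$ is also uniformly integrable.
   Context: $(\Omega,\mathcal F)$ is a measurable space, $\mathcal H$ a linear space of $\mathcal F$-measurable real functions containing the constants, closed under $X\mapsto|X|$ and $X\mapsto I_AX$ ($A\in\mathcal F$), and $\mathcal E:\mathcal H\to\mathbb R$ is a sublinear expectation (monotone, constant preserving, subadditive, positively homogeneous) with the monotone continuity property ($X_i\downarrow 0$ pointwise implies $\mathcal E(X_i)\to0$). $\|X\|_1:=\mathcal E(|X|)$ and $L^1$ is the completion of $\{X\in\mathcal H:\|X\|_1<\infty\}$ under this seminorm modulo null elements. A set $K\subset L^1$ is uniformly integrable if $\sup_{X\in K}\mathcal E(I_{\{|X|\ge c\}}|X|)\to0$ as $c\to\infty$. *)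

From Stdlib Require Import Reals Lra Classical ClassicalEpsilon.
Open Scope R_scope.

Record sigma_algebra {Omega : Type} (F : (Omega -> Prop) -> Prop) : Prop := {
  sa_full : F (fun _ => True);
  sa_compl : forall A, F A -> F (fun w => ~ A w);
  sa_union : forall A : nat -> Omega -> Prop,
      (forall n, F (A n)) -> F (fun w => exists n, A n w)
}.

Definition measurable {Omega : Type} (F : (Omega -> Prop) -> Prop)
  (X : Omega -> R) : Prop := forall a : R, F (fun w => X w <= a).

Definition indic {Omega : Type} (A : Omega -> Prop) (X : Omega -> R) : Omega -> R :=
  fun w => if excluded_middle_informative (A w) then X w else 0.

Record function_space {Omega : Type} (F : (Omega -> Prop) -> Prop)
  (H : (Omega -> R) -> Prop) : Prop := {
  fs_meas : forall X, H X -> measurable F X;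
  fs_const : forall c : R, H (fun _ => c);
  fs_add : forall X Y, H X -> H Y -> H (fun w => X w + Y w);
  fs_scal : forall (a : R) X, H X -> H (fun w => a * X w);
  fs_abs : forall X, H X -> H (fun w => Rabs (X w));
  fs_indic : forall A X, F A -> H X -> H (indic A X)
}.

(* E : H -> R sublinear expectation (E is total, axioms only on H). *)
Record sublinear_expectation {Omega : Type} (H : (Omega -> R) -> Prop)
  (E : (Omega -> R) -> R) : Prop := {
  se_mono : forall X Y, H X -> H Y -> (forall w, X w <= Y w) -> E X <= E Y;
  se_const : forall c : R, E (fun _ => c) = c;
  se_subadd : forall X Y, H X -> H Y -> E (fun w => X w + Y w) <= E X + E Y;
  se_poshom : forall (l : R) X, 0 <= l -> H X -> E (fun w => l * X w) = l * E X
}.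

Definition monotone_continuous {Omega : Type} (H : (Omega -> R) -> Prop)
  (E : (Omega -> R) -> R) : Prop :=
  forall Xs : nat -> Omega -> R,
    (forall n, H (Xs n)) ->
    (forall n w, Xs (S n) w <= Xs n w) ->
    (forall w, Un_cv (fun n => Xs n w) 0) ->
    Un_cv (fun n => E (Xs n)) 0.

Definition L1_approx {Omega : Type} (H : (Omega -> R) -> Prop)
  (E : (Omega -> R) -> R) (X : Omega -> R) (Xs : nat -> Omega -> R) : Prop :=
  (forall n, H (Xs n)) /\
  (forall w, Un_cv (fun n => Xs n w) (X w)) /\
  (forall eps, eps > 0 -> exists N : nat, forall n m, (n >= N)%nat -> (m >= N)%nat ->
      E (fun w => Rabs (Xs n w - Xs m w)) < eps).

(* Concrete model of the completion L^1: functions that are pointwise limits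
   of ||.||_1-Cauchy sequences of H (elements identified modulo ||.||_1-null). *)
Definition inL1 {Omega : Type} (H : (Omega -> R) -> Prop)
  (E : (Omega -> R) -> R) (X : Omega -> R) : Prop :=
  exists Xs, L1_approx H E X Xs.

(* Extension of E to L^1: E(X) = lim E(X_n) along an approximating sequence. *)
Definition E1 {Omega : Type} (H : (Omega -> R) -> Prop)
  (E : (Omega -> R) -> R) (X : Omega -> R) : R :=
  epsilon (inhabits 0%R) (fun r => exists Xs, L1_approx H E X Xs /\
                                   Un_cv (fun n => E (Xs n)) r).

Definition uniformly_integrable {Omega : Type} (H : (Omega -> R) -> Prop)
  (E : (Omega -> R) -> R) (K : (Omega -> R) -> Prop) : Prop :=
  (forall X, K X -> inL1 H E X) /\
  (forall eps, eps > 0 -> exists c0 : R, forall c, c >= c0 -> forall X, K X ->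
      E1 H E (indic (fun w => Rabs (X w) >= c) (fun w => Rabs (X w))) <= eps).

Definition convex_hull {Omega : Type} (K : (Omega -> R) -> Prop)
  (Y : Omega -> R) : Prop :=
  exists (n : nat) (lam : nat -> R) (Xs : nat -> Omega -> R),
    (forall i, (i <= n)%nat -> 0 <= lam i /\ K (Xs i)) /\
    sum_f_R0 lam n = 1 /\
    (forall w, Y w = sum_f_R0 (fun i => lam i * Xs i w) n).

Definition L1_closure {Omega : Type} (H : (Omega -> R) -> Prop)
  (E : (Omega -> R) -> R) (S : (Omega -> R) -> Prop) (Y : Omega -> R) : Prop :=
  inL1 H E Y /\
  (forall eps, eps > 0 -> exists Z, S Z /\ E1 H E (fun w => Rabs (Y w - Z w)) < eps).

From Pilot Require Import Defs.
From Stdlib Require Import Reals Lra Lia Classical ClassicalEpsilon.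
From Stdlib Require Import FunctionalExtensionality PropExtensionality.
Open Scope R_scope.

(* The excess functional X |-> E[(|X| - c)^+] is convex and 1-Lipschitz for the L^1
   distance, and it is sandwiched by the tails:
     (|x| - c)^+ <= |x| 1_{|x| >= c} <= 2 (|x| - c/2)^+.
   Hence a uniform bound on the tails of K at level c bounds the excess over c on the
   convex hull of K, then on its L^1 closure, and finally the tails of the closure at
   level 2c.  The properties of E on the completion (well-definedness, monotonicity,
   subadditivity) all rest on monotone continuity, through countable subadditivity. *)

Definition lipschitz2 (L : R) (g : R -> R -> R) : Prop :=
  forall a b a' b', Rabs (g a b - g a' b') <= L * (Rabs (a - a') + Rabs (b - b')).

Lemma Rmax_lipschitz a b a' b' :
  Rabs (Rmax a b - Rmax a' b') <= Rabs (a - a') + Rabs (b - b').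
Proof.
  pose proof (Rle_abs (a - a')); pose proof (Rle_abs (b - b')).
  pose proof (Rle_abs (- (a - a'))); pose proof (Rle_abs (- (b - b'))).
  rewrite !Rabs_Ropp in *.
  unfold Rmax; destruct (Rle_dec a b), (Rle_dec a' b'); apply Rabs_le; lra.
Qed.

Lemma Rmin_lipschitz a b a' b' :
  Rabs (Rmin a b - Rmin a' b') <= Rabs (a - a') + Rabs (b - b').
Proof.
  pose proof (Rle_abs (a - a')); pose proof (Rle_abs (b - b')).
  pose proof (Rle_abs (- (a - a'))); pose proof (Rle_abs (- (b - b'))).
  rewrite !Rabs_Ropp in *.
  unfold Rmin; destruct (Rle_dec a b), (Rle_dec a' b'); apply Rabs_le; lra.
Qed.

Lemma Rmax_abs_sub_lipschitz c a a' :
  Rabs (Rmax (Rabs a - c) 0 - Rmax (Rabs a' - c) 0) <= Rabs (a - a').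
Proof.
  eapply Rle_trans; [apply Rmax_lipschitz|].
  replace (Rabs a - c - (Rabs a' - c)) with (Rabs a - Rabs a') by ring.
  rewrite Rminus_0_r, Rabs_R0, Rplus_0_r. apply Rabs_triang_inv2.
Qed.

Lemma Rmax_abs_sub_convex (lam x : nat -> R) c n :
  (forall i, (i <= n)%nat -> 0 <= lam i) -> sum_f_R0 lam n = 1 ->
  Rmax (Rabs (sum_f_R0 (fun i => lam i * x i) n) - c) 0
    <= sum_f_R0 (fun i => lam i * Rmax (Rabs (x i) - c) 0) n.
Proof.
  intros hlam hsum. apply Rmax_lub.
  - assert (habs : Rabs (sum_f_R0 (fun i => lam i * x i) n)
              <= sum_f_R0 (fun i => lam i * Rmax (Rabs (x i) - c) 0 + lam i * c) n).
    { eapply Rle_trans; [apply sum_f_R0_triangle|]. apply sum_Rle; intros i hi.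
      specialize (hlam i hi).
      rewrite Rabs_mult, (Rabs_right (lam i)) by lra.
      pose proof (Rmax_l (Rabs (x i) - c) 0). nra. }
    rewrite plus_sum, <- scal_sum, hsum in habs. lra.
  - apply Rle_trans with (sum_f_R0 (fun _ => 0) n).
    + rewrite sum_cte; lra.
    + apply sum_Rle; intros i hi.
      pose proof (Rmax_r (Rabs (x i) - c) 0). specialize (hlam i hi). nra.
Qed.

Lemma Rabs_le_telescoping (z : nat -> R) K :
  Rabs (z O) <= sum_f_R0 (fun k => Rabs (z (S k) - z k)) K + Rabs (z (S K)).
Proof.
  assert (step : forall k, Rabs (z k) <= Rabs (z (S k) - z k) + Rabs (z (S k))).
  { intro k. pose proof (Rabs_triang_inv (z k) (z (S k))).
    rewrite (Rabs_minus_sym (z k)) in *. lra. }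
  induction K as [|K IH]; simpl; [apply step|].
  specialize (step (S K)). lra.
Qed.

Lemma sum_geometric_half_le e K :
  0 <= e -> sum_f_R0 (fun k => e * (/ 2) ^ S k) K <= e.
Proof.
  intros he.
  assert (hsum : sum_f_R0 (fun k => e * (/ 2) ^ S k) K = e * (1 - (/ 2) ^ S K)).
  { induction K as [|K IH]; [simpl; field|]. rewrite tech5, IH. simpl. field. }
  rewrite hsum. pose proof (pow_lt (/ 2) (S K) ltac:(lra)). nra.
Qed.

Fixpoint dominating_seq (n : nat) (M : nat -> nat) (k : nat) : nat :=
  match k with
  | O => Nat.max n (M O)
  | S k => S (Nat.max (dominating_seq n M k) (M (S k)))
  end.

Lemma cauchy_geometric_subsequence (d : nat -> nat -> R) (e : R) (n : nat) :
  0 < e ->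
  (forall eps, eps > 0 -> exists N, forall p q, (p >= N)%nat -> (q >= N)%nat -> d p q < eps) ->
  exists m : nat -> nat, (m O >= n)%nat /\ (forall k, (m k >= k)%nat) /\
    forall k, d (m (S k)) (m k) < e * (/ 2) ^ S k.
Proof.
  intros he hC.
  assert (hM : forall k, exists N, forall p q, (p >= N)%nat -> (q >= N)%nat ->
             d p q < e * (/ 2) ^ S k).
  { intro k; apply hC. pose proof (pow_lt (/ 2) (S k) ltac:(lra)). nra. }
  destruct (choice _ hM) as [M hM'].
  set (m := dominating_seq n M).
  assert (hmM : forall k, (m k >= M k)%nat) by (intros [|k]; unfold m; simpl; lia).
  assert (hmS : forall k, (m (S k) > m k)%nat) by (intro k; unfold m; simpl; lia).
  exists m; split; [unfold m; simpl; lia|split].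
  - intro k; induction k as [|k IH]; [lia|]. specialize (hmS k); lia.
  - intro k. apply hM'; [specialize (hmS k)|]; specialize (hmM k); lia.
Qed.

Definition excess {Omega : Type} (c : R) (X : Omega -> R) : Omega -> R :=
  fun w => Rmax (Rabs (X w) - c) 0.

Notation tail c X := (indic (fun w => Rabs (X w) >= c) (fun w => Rabs (X w))).

Lemma excess_le_tail {Omega : Type} c (X : Omega -> R) w : 0 <= c -> excess c X w <= tail c X w.
Proof.
  intros hc. unfold excess, indic. pose proof (Rabs_pos (X w)).
  destruct (excluded_middle_informative _); apply Rmax_lub; lra.
Qed.

Lemma tail_le_twice_excess {Omega : Type} c (X : Omega -> R) w :
  tail c X w <= 2 * excess (c / 2) X w.
Proof.
  unfold excess, indic. pose proof (Rmax_l (Rabs (X w) - c / 2) 0).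
  pose proof (Rmax_r (Rabs (X w) - c / 2) 0).
  destruct (excluded_middle_informative _); lra.
Qed.

Section SublinearL1.

Context {Omega : Type} {F : (Omega -> Prop) -> Prop}
  {H : (Omega -> R) -> Prop} {E : (Omega -> R) -> R}.
Hypothesis HF : sigma_algebra F.
Hypothesis HH : function_space F H.
Hypothesis HE : sublinear_expectation H E.
Hypothesis Hmc : monotone_continuous H E.

Lemma H_sub X Y : H X -> H Y -> H (fun w => X w - Y w).
Proof.
  intros hX hY.
  replace (fun w => X w - Y w) with (fun w => X w + (-1) * Y w)
    by (apply functional_extensionality; intro; ring).
  apply (fs_add _ _ HH); [exact hX | apply (fs_scal _ _ HH), hY].
Qed.

Lemma H_abs_sub X Y : H X -> H Y -> H (fun w => Rabs (X w - Y w)).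
Proof. intros hX hY; apply (fs_abs _ _ HH (fun w => X w - Y w)), H_sub; assumption. Qed.

Lemma H_Rmax X Y : H X -> H Y -> H (fun w => Rmax (X w) (Y w)).
Proof.
  intros hX hY.
  replace (fun w => Rmax (X w) (Y w)) with (fun w => / 2 * (X w + Y w + Rabs (X w - Y w))).
  - apply (fs_scal _ _ HH), (fs_add _ _ HH), H_abs_sub; try apply (fs_add _ _ HH); assumption.
  - apply functional_extensionality; intro w.
    unfold Rmax, Rabs; destruct (Rle_dec (X w) (Y w)), (Rcase_abs (X w - Y w)); lra.
Qed.

Lemma H_Rmin X Y : H X -> H Y -> H (fun w => Rmin (X w) (Y w)).
Proof.
  intros hX hY.
  replace (fun w => Rmin (X w) (Y w)) with (fun w => / 2 * (X w + Y w + - Rabs (X w - Y w))).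
  - apply (fs_scal _ _ HH), (fs_add _ _ HH); [apply (fs_add _ _ HH); assumption|].
    replace (fun w => - Rabs (X w - Y w)) with (fun w => -1 * Rabs (X w - Y w))
      by (apply functional_extensionality; intro; ring).
    apply (fs_scal _ _ HH), H_abs_sub; assumption.
  - apply functional_extensionality; intro w.
    unfold Rmin, Rabs; destruct (Rle_dec (X w) (Y w)), (Rcase_abs (X w - Y w)); lra.
Qed.

Lemma H_sum (h : nat -> Omega -> R) K :
  (forall k, H (h k)) -> H (fun w => sum_f_R0 (fun k => h k w) K).
Proof.
  intros hh; induction K as [|K IH]; [exact (hh O)|].
  apply (fs_add _ _ HH); [exact IH | exact (hh (S K))].
Qed.

Lemma E_nonneg X : H X -> (forall w, 0 <= X w) -> 0 <= E X.
Proof.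
  intros hX hpos. rewrite <- (se_const _ _ HE 0).
  apply (se_mono _ _ HE); [apply (fs_const _ _ HH) | exact hX | exact hpos].
Qed.

Lemma E_le_add X Y Z : H X -> H Y -> H Z ->
  (forall w, X w <= Y w + Z w) -> E X <= E Y + E Z.
Proof.
  intros hX hY hZ hle. eapply Rle_trans; [|apply (se_subadd _ _ HE); assumption].
  apply (se_mono _ _ HE); [exact hX | apply (fs_add _ _ HH); assumption | exact hle].
Qed.

Lemma E_abs_sub_le X Y : H X -> H Y -> Rabs (E X - E Y) <= E (fun w => Rabs (X w - Y w)).
Proof.
  intros hX hY. pose proof (H_abs_sub X Y hX hY) as hXY.
  assert (E X <= E Y + E (fun w => Rabs (X w - Y w))).
  { apply E_le_add; try assumption. intro w; pose proof (Rle_abs (X w - Y w)); lra. }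
  assert (E Y <= E X + E (fun w => Rabs (X w - Y w))).
  { apply E_le_add; try assumption. intro w; pose proof (Rle_abs (- (X w - Y w))).
    rewrite Rabs_Ropp in *; lra. }
  apply Rabs_le; lra.
Qed.

Lemma E_sum_le (h : nat -> Omega -> R) K :
  (forall k, H (h k)) -> E (fun w => sum_f_R0 (fun k => h k w) K) <= sum_f_R0 (fun k => E (h k)) K.
Proof.
  intros hh; induction K as [|K IH]; [apply Rle_refl|]. simpl.
  eapply Rle_trans; [apply (se_subadd _ _ HE); [apply H_sum | apply hh]; assumption|].
  lra.
Qed.

(* The defects (f - S_K)^+ of the partial sums S_K decrease to 0, so monotone
   continuity makes their expectations vanish. *)
Lemma E_countably_subadditive (f : Omega -> R) (h : nat -> Omega -> R) (B : R) :
  H f -> (forall k, H (h k)) -> (forall k w, 0 <= h k w) ->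
  (forall w eps, eps > 0 -> exists K, f w <= sum_f_R0 (fun k => h k w) K + eps) ->
  (forall K, sum_f_R0 (fun k => E (h k)) K <= B) ->
  E f <= B.
Proof.
  intros hf hh hpos hcover hB.
  set (S_ := fun K w => sum_f_R0 (fun k => h k w) K).
  set (defect := fun K w => Rmax (f w - S_ K w) 0).
  assert (hS : forall K, H (S_ K)) by (intro K; apply H_sum, hh).
  assert (hdefect : forall K, H (defect K)).
  { intro K; apply H_Rmax; [apply H_sub; auto | apply (fs_const _ _ HH)]. }
  assert (hSmono : forall K K' w, (K <= K')%nat -> S_ K w <= S_ K' w).
  { intros K K' w hle; induction hle as [|K' _ IH]; [lra|].
    unfold S_ in *; simpl; specialize (hpos (S K') w); lra. }
  assert (hcv : Un_cv (fun K => E (defect K)) 0).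
  { apply Hmc; [exact hdefect| |].
    - intros K w; apply Rle_max_compat_r; pose proof (hSmono K (S K) w (le_S _ _ (le_n K))); lra.
    - intros w eps heps. destruct (hcover w (eps / 2)) as [K hK]; [lra|].
      exists K; intros n hn. unfold R_dist, defect. rewrite Rminus_0_r.
      pose proof (hSmono K n w hn). pose proof (Rmax_r (f w - S_ n w) 0).
      rewrite Rabs_right by lra. unfold S_ in *.
      unfold Rmax; destruct (Rle_dec _ _); lra. }
  assert (hbound : forall K, E f <= B + E (defect K)).
  { intro K. pose proof (E_sum_le h K hh) as hsum. specialize (hB K).
    assert (E f <= E (S_ K) + E (defect K)).
    { apply E_le_add; auto. intro w; unfold defect; pose proof (Rmax_l (f w - S_ K w) 0); lra. }
    unfold S_ in *; lra. }
  apply Rnot_lt_le; intro hlt.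
  destruct (hcv (E f - B)) as [N hN]; [lra|].
  specialize (hN N (le_n N)); specialize (hbound N). unfold R_dist in hN.
  rewrite Rminus_0_r in hN. pose proof (Rle_abs (E (defect N))). lra.
Qed.

Lemma E_abs_le_telescoping (Z : nat -> Omega -> R) (m : nat -> nat) (B : R) :
  (forall n, H (Z n)) -> (forall w, Un_cv (fun n => Z n w) 0) -> (forall k, (m k >= k)%nat) ->
  (forall K, sum_f_R0 (fun k => E (fun w => Rabs (Z (m (S k)) w - Z (m k) w))) K <= B) ->
  E (fun w => Rabs (Z (m O) w)) <= B.
Proof.
  intros hZ hcv hm hB.
  apply (E_countably_subadditive _ (fun k w => Rabs (Z (m (S k)) w - Z (m k) w)));
    [apply (fs_abs _ _ HH), hZ | intro k; apply H_abs_sub; apply hZ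
    | intros; apply Rabs_pos | | exact hB].
  intros w eps heps. destruct (hcv w eps heps) as [K hK].
  exists K. pose proof (Rabs_le_telescoping (fun k => Z (m k) w) K) as htele.
  assert (hmK : (m (S K) >= K)%nat) by (specialize (hm (S K)); lia).
  specialize (hK (m (S K)) hmK).
  unfold R_dist in hK; rewrite Rminus_0_r in hK. simpl in htele. lra.
Qed.

(* The key fact behind the extension of E to L^1.  Pass to a subsequence with geometric
   gaps and telescope. *)
Lemma E_abs_cv0_of_cauchy (Z : nat -> Omega -> R) :
  (forall n, H (Z n)) -> (forall w, Un_cv (fun n => Z n w) 0) ->
  (forall eps, eps > 0 -> exists N, forall n m, (n >= N)%nat -> (m >= N)%nat ->
      E (fun w => Rabs (Z n w - Z m w)) < eps) ->
  Un_cv (fun n => E (fun w => Rabs (Z n w))) 0.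
Proof.
  intros hZ hcv hC eps heps.
  destruct (hC (eps / 2)) as [N hN]; [lra|].
  exists N; intros n hn.
  destruct (cauchy_geometric_subsequence (fun p q => E (fun w => Rabs (Z p w - Z q w)))
              (eps / 4) n) as [m [hm0 [hm hgap]]]; [lra | exact hC |].
  assert (hZm : E (fun w => Rabs (Z (m O) w)) <= eps / 4).
  { apply (E_abs_le_telescoping Z m); [exact hZ | exact hcv | exact hm |].
    intro K. eapply Rle_trans; [|apply (sum_geometric_half_le (eps / 4) K); lra].
    apply sum_Rle; intros k _; left; apply hgap. }
  assert (hZn : E (fun w => Rabs (Z n w)) <= E (fun w => Rabs (Z (m O) w))
                   + E (fun w => Rabs (Z n w - Z (m O) w))).
  { apply E_le_add; [apply (fs_abs _ _ HH), hZ | apply (fs_abs _ _ HH), hZ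
                     | apply H_abs_sub; apply hZ |].
    intro w. pose proof (Rabs_triang_inv (Z n w) (Z (m O) w)). lra. }
  pose proof (hN n (m O) hn ltac:(lia)).
  pose proof (E_nonneg (fun w => Rabs (Z n w)) ltac:(apply (fs_abs _ _ HH), hZ)
                (fun w => Rabs_pos _)).
  unfold R_dist. rewrite Rminus_0_r, Rabs_right; lra.
Qed.

Lemma L1_approx_lipschitz2 X Xs Y Ys (g : R -> R -> R) (L : R) :
  0 <= L -> lipschitz2 L g ->
  (forall U V, H U -> H V -> H (fun w => g (U w) (V w))) ->
  L1_approx H E X Xs -> L1_approx H E Y Ys ->
  L1_approx H E (fun w => g (X w) (Y w)) (fun n w => g (Xs n w) (Ys n w)).
Proof.
  intros hL hg hH [hXs [pX cX]] [hYs [pY cY]].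
  assert (hdelta : forall eps, eps > 0 ->
            eps / (2 * (L + 1)) > 0 /\ L * (eps / (2 * (L + 1))) < eps / 2).
  { intros eps heps; split; [apply Rdiv_lt_0_compat; lra|].
    apply Rmult_lt_reg_r with (2 * (L + 1)); [lra|]. field_simplify; [nra | lra]. }
  split; [|split].
  - intro n; apply hH; auto.
  - intros w eps heps. destruct (hdelta eps heps) as [hd hLd].
    destruct (pX w _ hd) as [N1 h1]; destruct (pY w _ hd) as [N2 h2].
    exists (max N1 N2); intros n hn. unfold R_dist in *.
    specialize (h1 n ltac:(lia)); specialize (h2 n ltac:(lia)).
    eapply Rle_lt_trans; [apply hg|].
    pose proof (Rabs_pos (Xs n w - X w)); pose proof (Rabs_pos (Ys n w - Y w)). nra.
  - intros eps heps. destruct (hdelta eps heps) as [hd hLd].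
    destruct (cX _ hd) as [N1 h1]; destruct (cY _ hd) as [N2 h2].
    exists (max N1 N2); intros n m hn hm.
    specialize (h1 n m ltac:(lia) ltac:(lia)); specialize (h2 n m ltac:(lia) ltac:(lia)).
    assert (hdX : H (fun w => Rabs (Xs n w - Xs m w))) by (apply H_abs_sub; auto).
    assert (hdY : H (fun w => Rabs (Ys n w - Ys m w))) by (apply H_abs_sub; auto).
    eapply Rle_lt_trans.
    + apply (E_le_add _ (fun w => L * Rabs (Xs n w - Xs m w))
                        (fun w => L * Rabs (Ys n w - Ys m w)));
        try apply (fs_scal _ _ HH); auto.
      * apply H_abs_sub; apply hH; auto.
      * intro w; specialize (hg (Xs n w) (Ys n w) (Xs m w) (Ys m w)); lra.
    + rewrite (se_poshom _ _ HE L _ hL hdX), (se_poshom _ _ HE L _ hL hdY).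
      pose proof (E_nonneg _ hdX (fun w => Rabs_pos _)).
      pose proof (E_nonneg _ hdY (fun w => Rabs_pos _)). nra.
Qed.

Lemma L1_approx_E_cv X Xs : L1_approx H E X Xs -> exists l, Un_cv (fun n => E (Xs n)) l.
Proof.
  intros [hXs [_ hC]].
  assert (hcauchy : Cauchy_crit (fun n => E (Xs n))).
  { intros eps heps. destruct (hC eps heps) as [N hN]. exists N; intros n m hn hm.
    unfold R_dist. eapply Rle_lt_trans; [apply E_abs_sub_le; apply hXs | apply hN; assumption]. }
  destruct (R_complete _ hcauchy) as [l hl]. eauto.
Qed.

Lemma L1_approx_E_lim_unique X Xs Ys a b :
  L1_approx H E X Xs -> L1_approx H E X Ys ->
  Un_cv (fun n => E (Xs n)) a -> Un_cv (fun n => E (Ys n)) b -> a = b.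
Proof.
  intros hXs hYs ha hb.
  assert (lip_sub : lipschitz2 1 (fun a b => a - b)).
  { intros a0 b0 a' b'. rewrite Rmult_1_l.
    replace (a0 - b0 - (a' - b')) with ((a0 - a') + - (b0 - b')) by ring.
    eapply Rle_trans; [apply Rabs_triang | rewrite Rabs_Ropp; lra]. }
  destruct (L1_approx_lipschitz2 X Xs X Ys _ 1 ltac:(lra) lip_sub H_sub hXs hYs)
    as [hZ [pZ cZ]].
  assert (hcv0 : Un_cv (fun n => E (fun w => Rabs (Xs n w - Ys n w))) 0).
  { apply E_abs_cv0_of_cauchy; [exact hZ | | exact cZ].
    intro w; replace 0 with (X w - X w) by ring; apply pZ. }
  assert (hdiff : Un_cv (fun n => E (Xs n) - E (Ys n)) 0).
  { intros eps heps. destruct (hcv0 eps heps) as [N hN]. exists N; intros n hn.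
    specialize (hN n hn). unfold R_dist in *. rewrite Rminus_0_r in *.
    eapply Rle_lt_trans; [|exact hN].
    eapply Rle_trans; [apply E_abs_sub_le; [apply hXs | apply hYs] | apply Rle_abs]. }
  pose proof (UL_sequence _ _ _ (CV_minus _ _ _ _ ha hb) hdiff). lra.
Qed.

Lemma E1_cv X Xs : L1_approx H E X Xs -> Un_cv (fun n => E (Xs n)) (Defs.E1 H E X).
Proof.
  intros hXs. destruct (L1_approx_E_cv X Xs hXs) as [l hl].
  assert (hex : exists r Ys, L1_approx H E X Ys /\ Un_cv (fun n => E (Ys n)) r) by eauto.
  destruct (epsilon_spec (inhabits 0) _ hex) as [Ys [hYs hYl]].
  fold (Defs.E1 H E X) in hYl.
  rewrite <- (L1_approx_E_lim_unique X Xs Ys l (Defs.E1 H E X)); assumption.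
Qed.

Lemma inL1_lipschitz2 X Y (g : R -> R -> R) (L : R) :
  0 <= L -> lipschitz2 L g -> (forall U V, H U -> H V -> H (fun w => g (U w) (V w))) ->
  inL1 H E X -> inL1 H E Y -> inL1 H E (fun w => g (X w) (Y w)).
Proof.
  intros hL hg hH [Xs hXs] [Ys hYs].
  eexists; exact (L1_approx_lipschitz2 X Xs Y Ys g L hL hg hH hXs hYs).
Qed.

Lemma inL1_lipschitz X (g : R -> R) (L : R) :
  0 <= L -> (forall a a', Rabs (g a - g a') <= L * Rabs (a - a')) ->
  (forall U, H U -> H (fun w => g (U w))) ->
  inL1 H E X -> inL1 H E (fun w => g (X w)).
Proof.
  intros hL hg hH hX. apply (inL1_lipschitz2 X X (fun a _ => g a) L); auto.
  intros a b a' b'. specialize (hg a a'). pose proof (Rabs_pos (b - b')). nra.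
Qed.

Lemma lipschitz2_add : lipschitz2 1 Rplus.
Proof.
  intros a b a' b'. replace (a + b - (a' + b')) with ((a - a') + (b - b')) by ring.
  rewrite Rmult_1_l; apply Rabs_triang.
Qed.

Lemma inL1_add X Y : inL1 H E X -> inL1 H E Y -> inL1 H E (fun w => X w + Y w).
Proof.
  apply (inL1_lipschitz2 X Y Rplus 1); [lra | exact lipschitz2_add | apply (fs_add _ _ HH)].
Qed.

Lemma inL1_scal l X : inL1 H E X -> inL1 H E (fun w => l * X w).
Proof.
  apply (inL1_lipschitz X (fun a => l * a) (Rabs l)); [apply Rabs_pos| |apply (fs_scal _ _ HH)].
  intros a a'. rewrite <- Rabs_mult. right; f_equal; ring.
Qed.

Lemma inL1_abs_sub X Y : inL1 H E X -> inL1 H E Y -> inL1 H E (fun w => Rabs (X w - Y w)).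
Proof.
  apply (inL1_lipschitz2 X Y (fun a b => Rabs (a - b)) 1); [lra | | exact H_abs_sub].
  intros a b a' b'. eapply Rle_trans; [apply Rabs_triang_inv2|].
  replace (a - b - (a' - b')) with ((a - a') + - (b - b')) by ring.
  eapply Rle_trans; [apply Rabs_triang | rewrite Rabs_Ropp; lra].
Qed.

Lemma inL1_excess c X : inL1 H E X -> inL1 H E (excess c X).
Proof.
  apply (inL1_lipschitz X (fun a => Rmax (Rabs a - c) 0) 1); [lra | | ].
  - intros a a'. rewrite Rmult_1_l. apply Rmax_abs_sub_lipschitz.
  - intros U hU.
    apply H_Rmax; [apply H_sub; [apply (fs_abs _ _ HH), hU|] |]; apply (fs_const _ _ HH).
Qed.

Lemma inL1_lincomb (lam : nat -> R) (G : nat -> Omega -> R) n :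
  (forall i, (i <= n)%nat -> inL1 H E (G i)) ->
  inL1 H E (fun w => sum_f_R0 (fun i => lam i * G i w) n).
Proof.
  induction n as [|n IH]; intros hG; simpl; [apply inL1_scal, hG; lia|].
  apply inL1_add; [apply IH; intros; apply hG; lia | apply inL1_scal, hG; lia].
Qed.

Lemma E1_add X Y : inL1 H E X -> inL1 H E Y ->
  Defs.E1 H E (fun w => X w + Y w) <= Defs.E1 H E X + Defs.E1 H E Y.
Proof.
  intros [Xs hXs] [Ys hYs].
  pose proof (L1_approx_lipschitz2 X Xs Y Ys Rplus 1 ltac:(lra) lipschitz2_add
                (fs_add _ _ HH) hXs hYs) as hsum.
  eapply Rle_cv_lim;
    [|exact (E1_cv _ _ hsum) | exact (CV_plus _ _ _ _ (E1_cv _ _ hXs) (E1_cv _ _ hYs))].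
  intro n; apply (se_subadd _ _ HE); [apply hXs | apply hYs].
Qed.

Lemma E1_scal l X : 0 <= l -> inL1 H E X -> Defs.E1 H E (fun w => l * X w) = l * Defs.E1 H E X.
Proof.
  intros hl [Xs hXs].
  assert (lip : lipschitz2 l (fun a _ => l * a)).
  { intros a b a' b'. replace (l * a - l * a') with (l * (a - a')) by ring.
    rewrite Rabs_mult, Rabs_right by lra. pose proof (Rabs_pos (b - b')). nra. }
  pose proof (L1_approx_lipschitz2 X Xs X Xs _ l hl lip
                (fun U _ hU _ => fs_scal _ _ HH l U hU) hXs hXs) as hlXs.
  apply (UL_sequence _ _ _ (E1_cv _ _ hlXs)).
  replace (fun n => E (fun w => l * Xs n w)) with (fun n => l * E (Xs n)).
  - apply CV_mult; [|apply E1_cv; exact hXs].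
    intros e he; exists O; intros; unfold R_dist; rewrite Rminus_diag, Rabs_R0; lra.
  - apply functional_extensionality; intro n.
    rewrite (se_poshom _ _ HE); [reflexivity | exact hl | apply hXs].
Qed.

(* If Xs and Ys approximate X <= Y, then min(Xs, Ys) approximates min(X, Y) = X. *)
Lemma E1_mono X Y : inL1 H E X -> inL1 H E Y -> (forall w, X w <= Y w) ->
  Defs.E1 H E X <= Defs.E1 H E Y.
Proof.
  intros [Xs hXs] [Ys hYs] hle.
  assert (lip : lipschitz2 1 Rmin) by (intros a b a' b'; rewrite Rmult_1_l; apply Rmin_lipschitz).
  pose proof (L1_approx_lipschitz2 X Xs Y Ys Rmin 1 ltac:(lra) lip H_Rmin hXs hYs) as hmin.
  replace (fun w => Rmin (X w) (Y w)) with X in hmin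
    by (apply functional_extensionality; intro w; rewrite Rmin_left; auto).
  eapply Rle_cv_lim; [|exact (E1_cv _ _ hmin) | exact (E1_cv _ _ hYs)].
  intro n; apply (se_mono _ _ HE); [apply H_Rmin; [apply hXs | apply hYs] | apply hYs |].
  intro w; apply Rmin_r.
Qed.

Lemma E1_lincomb_le (lam : nat -> R) (G : nat -> Omega -> R) (b : R) n :
  (forall i, (i <= n)%nat -> 0 <= lam i /\ inL1 H E (G i) /\ Defs.E1 H E (G i) <= b) ->
  Defs.E1 H E (fun w => sum_f_R0 (fun i => lam i * G i w) n) <= sum_f_R0 lam n * b.
Proof.
  induction n as [|n IH]; intros hG.
  - destruct (hG O (le_n _)) as [hl [hin hb]]. simpl. rewrite E1_scal; [nra | exact hl | exact hin].
  - destruct (hG (S n) (le_n _)) as [hl [hin hb]]. simpl.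
    eapply Rle_trans; [apply E1_add; [apply inL1_lincomb; intros i hi; apply hG; lia
                                      | apply inL1_scal, hin]|].
    rewrite E1_scal by assumption.
    assert (IH' := IH ltac:(intros i hi; apply hG; lia)). nra.
Qed.

Lemma F_ext (A B : Omega -> Prop) : (forall w, A w <-> B w) -> F A -> F B.
Proof.
  intros hAB hA. replace B with A; [exact hA|].
  apply functional_extensionality; intro w; apply propositional_extensionality, hAB.
Qed.

Lemma F_forall (A : nat -> Omega -> Prop) : (forall n, F (A n)) -> F (fun w => forall n, A n w).
Proof.
  intros hA.
  apply (F_ext (fun w => ~ exists n, ~ A n w)).
  - intro w; split.
    + intros h n; apply NNPP; intro hn; apply h; eauto.
    + intros h [n hn]; apply hn, h.
  - apply (sa_compl _ HF), (sa_union _ HF); intro n; apply (sa_compl _ HF), hA.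
Qed.

(* {V >= c} = \bigcap_k \bigcup_N \bigcap_n {Vs (N + n) > c - 1/(k+1)} *)
Lemma F_ge_of_cv (Vs : nat -> Omega -> R) (V : Omega -> R) c :
  (forall n, measurable F (Vs n)) -> (forall w, Un_cv (fun n => Vs n w) (V w)) ->
  F (fun w => V w >= c).
Proof.
  intros hVs hcv.
  apply (F_ext (fun w => forall k, exists N, forall n, Vs (N + n)%nat w > c - / INR (S k))).
  - intro w; split.
    + intros h. apply Rnot_lt_ge; intro hlt.
      destruct (archimed_cor1 ((V w - c) / -2)) as [k [hk hk0]]; [lra|].
      destruct (h (k - 1)%nat) as [N hN].
      replace (S (k - 1)) with k in hN by lia.
      destruct (hcv w ((c - V w) / 2)) as [N' hN']; [lra|].
      specialize (hN N'); specialize (hN' (N + N')%nat ltac:(lia)).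
      unfold R_dist in hN'. pose proof (Rle_abs (Vs (N + N')%nat w - V w)). lra.
    + intros h k. destruct (hcv w (/ INR (S k))) as [N hN].
      { apply Rinv_0_lt_compat, lt_0_INR; lia. }
      exists N; intro n. specialize (hN (N + n)%nat ltac:(lia)). unfold R_dist in hN.
      pose proof (Rle_abs (- (Vs (N + n)%nat w - V w))). rewrite Rabs_Ropp in *. lra.
  - apply F_forall; intro k. apply (sa_union _ HF); intro N. apply F_forall; intro n.
    apply (F_ext (fun w => ~ Vs (N + n)%nat w <= c - / INR (S k))); [intro; lra|].
    apply (sa_compl _ HF), hVs.
Qed.

Lemma inL1_tail c X : inL1 H E X -> inL1 H E (tail c X).
Proof.
  intros [Xs [hXs [pX cX]]].
  set (A := fun w => Rabs (X w) >= c).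
  assert (pabs : forall w, Un_cv (fun n => Rabs (Xs n w)) (Rabs (X w))).
  { intros w e he. destruct (pX w e he) as [N hN]. exists N; intros n hn.
    eapply Rle_lt_trans; [apply Rabs_triang_inv2 | exact (hN n hn)]. }
  assert (hA : F A).
  { apply (F_ge_of_cv (fun n w => Rabs (Xs n w))); [|exact pabs].
    intro n; apply (fs_meas _ _ HH), (fs_abs _ _ HH), hXs. }
  exists (fun n => indic A (fun w => Rabs (Xs n w))). split; [|split].
  - intro n; apply (fs_indic _ _ HH); [exact hA | apply (fs_abs _ _ HH), hXs].
  - intro w. unfold indic. destruct (excluded_middle_informative (A w)); [apply pabs|].
    intros e he; exists O; intros; unfold R_dist; rewrite Rminus_diag, Rabs_R0; lra.
  - intros e he. destruct (cX e he) as [N hN]. exists N; intros n m hn hm.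
    eapply Rle_lt_trans; [|exact (hN n m hn hm)].
    apply (se_mono _ _ HE); [apply H_abs_sub; apply (fs_indic _ _ HH), (fs_abs _ _ HH); auto
                            | apply H_abs_sub; auto |].
    intro w. unfold indic. destruct (excluded_middle_informative (A w)); [apply Rabs_triang_inv2|].
    rewrite Rminus_diag, Rabs_R0. apply Rabs_pos.
Qed.

Lemma inL1_convex_hull (K : (Omega -> R) -> Prop) Z :
  (forall X, K X -> inL1 H E X) -> convex_hull K Z -> inL1 H E Z.
Proof.
  intros hK [n [lam [Xs [hXs [_ hZ]]]]].
  replace Z with (fun w => sum_f_R0 (fun i => lam i * Xs i w) n)
    by (apply functional_extensionality; intro w; symmetry; apply hZ).
  apply inL1_lincomb; intros i hi; apply hK, hXs, hi.
Qed.

Lemma E1_tail_le_excess c Y :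
  inL1 H E Y -> Defs.E1 H E (tail c Y) <= 2 * Defs.E1 H E (excess (c / 2) Y).
Proof.
  intros hY. rewrite <- E1_scal; [|lra | apply inL1_excess, hY].
  apply E1_mono; [apply inL1_tail, hY | apply inL1_scal, inL1_excess, hY |].
  intro w; apply tail_le_twice_excess.
Qed.

Lemma E1_excess_convex_hull (K : (Omega -> R) -> Prop) c b Z :
  0 <= c -> (forall X, K X -> inL1 H E X /\ Defs.E1 H E (tail c X) <= b) ->
  convex_hull K Z -> Defs.E1 H E (excess c Z) <= b.
Proof.
  intros hc hK [n [lam [Xs [hXs [hsum hZ]]]]].
  replace Z with (fun w => sum_f_R0 (fun i => lam i * Xs i w) n)
    by (apply functional_extensionality; intro w; symmetry; apply hZ).
  assert (hXin : forall i, (i <= n)%nat -> inL1 H E (Xs i)) by (intros i hi; apply hK, hXs, hi).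
  replace b with (sum_f_R0 lam n * b) by (rewrite hsum; ring).
  eapply Rle_trans; [|apply (E1_lincomb_le lam (fun i => tail c (Xs i)))].
  - apply E1_mono.
    + apply inL1_excess, inL1_lincomb, hXin.
    + apply inL1_lincomb; intros i hi; apply inL1_tail, hXin, hi.
    + intro w. eapply Rle_trans;
        [apply Rmax_abs_sub_convex; [intros i hi; apply hXs, hi | exact hsum]|].
      apply sum_Rle; intros i hi. apply Rmult_le_compat_l; [apply hXs, hi|].
      apply (excess_le_tail c (Xs i) w hc).
  - intros i hi. split; [apply hXs, hi|]. split; [apply inL1_tail, hXin, hi | apply hK, hXs, hi].
Qed.

Lemma E1_excess_closure (A : (Omega -> R) -> Prop) c b Y :
  (forall Z, A Z -> inL1 H E Z) -> (forall Z, A Z -> Defs.E1 H E (excess c Z) <= b) ->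
  L1_closure H E A Y -> Defs.E1 H E (excess c Y) <= b.
Proof.
  intros hAin hAb [hY hclose]. apply Rle_plus_epsilon; intros d hd.
  destruct (hclose d hd) as [Z [hZ hYZ]].
  assert (hsplit : Defs.E1 H E (excess c Y)
            <= Defs.E1 H E (fun w => excess c Z w + Rabs (Y w - Z w))).
  { apply E1_mono;
      [apply inL1_excess, hY | apply inL1_add; [apply inL1_excess | apply inL1_abs_sub]; auto |].
    intro w. pose proof (Rmax_abs_sub_lipschitz c (Y w) (Z w)). unfold excess.
    pose proof (Rle_abs (Rmax (Rabs (Y w) - c) 0 - Rmax (Rabs (Z w) - c) 0)). lra. }
  pose proof (E1_add (excess c Z) (fun w => Rabs (Y w - Z w))
                (inL1_excess c Z (hAin Z hZ)) (inL1_abs_sub Y Z hY (hAin Z hZ))).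
  pose proof (hAb Z hZ). lra.
Qed.

End SublinearL1.

Theorem corollary2p14 (Omega : Type) (F : (Omega -> Prop) -> Prop)
  (H : (Omega -> R) -> Prop) (E : (Omega -> R) -> R)
  (HF : sigma_algebra F) (HH : function_space F H)
  (HE : sublinear_expectation H E) (Hmc : monotone_continuous H E)
  (K : (Omega -> R) -> Prop) :
  (forall X, K X -> inL1 H E X) ->
  uniformly_integrable H E K ->
  uniformly_integrable H E (L1_closure H E (convex_hull K)).
Proof.
  (* The first hypothesis is the first component of uniform integrability. *)
  intros _ [hKL1 hUI]. split; [intros Y [hY _]; exact hY|].
  intros eps heps.
  destruct (hUI (eps / 2)) as [c0 hc0]; [lra|].
  exists (2 * Rmax c0 0). intros c hc Y hY.
  assert (hc2 : c / 2 >= c0 /\ 0 <= c / 2)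
    by (pose proof (Rmax_l c0 0); pose proof (Rmax_r c0 0); lra).
  assert (hexcess : Defs.E1 H E (excess (c / 2) Y) <= eps / 2).
  { apply (E1_excess_closure HH HE Hmc (convex_hull K)); [| |exact hY].
    - intros Z hZ; exact (inL1_convex_hull HH HE K Z hKL1 hZ).
    - intros Z hZ. apply (E1_excess_convex_hull HF HH HE Hmc K); [lra | | exact hZ].
      intros X hX; split; [exact (hKL1 X hX) | apply hc0; [lra | exact hX]]. }
  pose proof (E1_tail_le_excess HF HH HE Hmc c Y (proj1 hY)). lra.
Qed.
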